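(* Let $K=\mathbb{Q}(\rho)$, where $\rho$ is a root of $x^3-ax^2-(a+3)x-1$ with $a\equiv3$ or $21\pmod{27}$, $a>12$ and $\frac{\Delta}{27}$ square-free, where $\Delta=a^2+3a+9$. Put $g_2=\rho$, $g_3=\frac{1+\rho+\rho^2}{3}$. \begin{enumerate} \item If $\alpha=-r\rho+\rho^2$ with $1\leq r\leq\frac{a}{3}$, then $N(\alpha)\leq\frac{2a^3+9a^2+27a+27}{27}=\frac{(2a+3)\Delta}{27}$. \item If $\alpha=-(r+1)g_2+g_3$ with $0\leq r\leq\frac{a}{3}-1$, then $N(\alpha)<\frac{(2a+3)\Delta}{27}$. \end{enumerate}
   Context: $N$ denotes the norm from $K$ to $\mathbb{Q}$. *)

From mathcomp Require Import all_boot all_order all_algebra.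
Set Implicit Arguments. Unset Strict Implicit. Unset Printing Implicit Defensive.
Import Order.TTheory GRing.Theory Num.Theory.
Local Open Scope ring_scope.

Definition fa (a : rat) : {poly rat} :=
  'X^3 - a%:P * 'X^2 - (a + 3)%:P * 'X - 1.

(* Matrix of multiplication by rho on K, in the Q-basis (1, rho, rho^2),
   acting on row coordinate vectors: rho*1 = rho, rho*rho = rho^2,
   rho*rho^2 = 1 + (a+3) rho + a rho^2. *)
Definition rho_mx (a : rat) : 'M[rat]_3 :=
  \matrix_(i < 3, j < 3)
    nth 0 (nth [::] [:: [:: 0; 1; 0]; [:: 0; 0; 1]; [:: 1; a + 3; a]] i) j.

(* The element alpha = p(rho) of K; its norm N_{K/Q}(alpha) is the
   determinant of the Q-linear map x |-> alpha x, i.e. det (p(M_rho)). *)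
Definition normK (a : rat) (p : {poly rat}) : rat :=
  \det (horner_mx (rho_mx a) p).

Definition squarefree (n : nat) : Prop :=
  forall p : nat, prime p -> ~~ (p ^ 2 %| n)%N.

Definition Delta (a : nat) : nat := (a ^ 2 + 3 * a + 9)%N.

From mathcomp Require Import all_boot all_order all_algebra.
From mathcomp Require Import ring lra.
Import Order.TTheory GRing.Theory Num.Theory.
Local Open Scope ring_scope.

(* Both norms are explicit cubic polynomials in a and r, obtained as 3x3
   determinants of the multiplication matrix.  In part 1 the gap to the bound
   factors as (a - 3r)(2a^2 + 6ar - 9r^2 + 9a + 27)/27, which is nonnegative
   for 0 <= 3r <= a and vanishes at r = a/3, so the bound is sharp.  In part 2,
   writing k = 3(r+1) - 1 <= a - 1, the norm is at most
   (2a^2 + 6a + 17 + (a^2 + 3a + 6) k)/27 <= (a^3 + 4a^2 + 9a + 11)/27, well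
   below the bound. *)

Lemma det_mx33 (R : comNzRingType) (A : 'M[R]_3) :
  \det A = A 0 0 * (A 1 1 * A 2 2 - A 1 2 * A 2 1)
         - A 0 1 * (A 1 0 * A 2 2 - A 1 2 * A 2 0)
         + A 0 2 * (A 1 0 * A 2 1 - A 1 1 * A 2 0).
Proof.
rewrite -[in LHS](_ : \matrix_(i, j) A (inord i) (inord j) = A); last first.
  by apply/matrixP => i j; rewrite mxE !inord_val.
rewrite (expand_det_row _ ord0) !big_ord_recl big_ord0 /cofactor.
rewrite !(expand_det_row _ ord0) !big_ord_recl !big_ord0 /cofactor !det_mx11 !mxE /=.
have [-> -> ->] : [/\ inord 0 = 0 :> 'I_3, inord 1 = 1 :> 'I_3 & inord 2 = 2 :> 'I_3].
  by split; apply: val_inj; rewrite /= inordK.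
ring.
Qed.

Lemma normK_rho2_sub_rho (a r : rat) :
  normK a ('X^2 - r *: 'X) = a * r ^+ 2 + (a + 3) * r + 1 - r ^+ 3.
Proof.
rewrite /normK -mul_polyC rmorphB !rmorphM /= horner_mx_C horner_mx_X.
rewrite det_mx33 -!mulmxE mul_scalar_mx !mxE !big_ord_recl !big_ord0 !mxE /=.
ring.
Qed.

Lemma normK_g3_sub_rho (a c : rat) :
  normK a (3^-1 *: (1 + 'X + 'X^2) - c *: 'X) =
  (2 * a ^+ 2 + 6 * a + 17 + (a ^+ 2 + 3 * a + 6) * (3 * c - 1)
   - 3 * (3 * c - 1) ^+ 2 - (3 * c - 1) ^+ 3) / 27.
Proof.
rewrite /normK -!mul_polyC rmorphB !rmorphM !rmorphD /= !rmorphM rmorph1 /=.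
rewrite !horner_mx_C horner_mx_X.
rewrite det_mx33 -!mulmxE !mul_scalar_mx !mxE !big_ord_recl !big_ord0 !mxE /=.
by field.
Qed.

Lemma natr_Delta (a : nat) : (Delta a)%:R = a%:R ^+ 2 + 3 * a%:R + 9 :> rat.
Proof. by rewrite /Delta natrD natrD natrX [(3 * a)%:R]natrM. Qed.

Lemma bound_sub_normK_rho2_sub_rho (a r : rat) :
  (2 * a + 3) * (a ^+ 2 + 3 * a + 9) / 27 - normK a ('X^2 - r *: 'X)
  = (a - 3 * r) * (2 * a ^+ 2 + 6 * a * r - 9 * r ^+ 2 + 9 * a + 27) / 27.
Proof. by rewrite normK_rho2_sub_rho; field. Qed.

Lemma normK_rho2_sub_rho_le (a r : rat) : 0 <= r -> 3 * r <= a ->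
  normK a ('X^2 - r *: 'X) <= (2 * a + 3) * (a ^+ 2 + 3 * a + 9) / 27.
Proof.
move=> r_ge0 le_3r_a; rewrite -subr_ge0 bound_sub_normK_rho2_sub_rho.
have cofactor_ge0 : 0 <= 2 * a ^+ 2 + 6 * a * r - 9 * r ^+ 2 + 9 * a + 27
  by nra.
by rewrite divr_ge0 // mulr_ge0 // subr_ge0.
Qed.

Lemma normK_g3_sub_rho_lt (a c : rat) : 0 <= c -> 3 * c <= a ->
  normK a (3^-1 *: (1 + 'X + 'X^2) - c *: 'X)
    < (2 * a + 3) * (a ^+ 2 + 3 * a + 9) / 27.
Proof.
move=> c_ge0 le_3c_a; rewrite normK_g3_sub_rho ltr_pM2r ?invr_gt0 //.
set k := 3 * c - 1.
have k_ge_N1 : -1 <= k by rewrite /k; lra.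
have k_le : k <= a - 1 by rewrite /k; lra.
have cubic_term_ge0 : 0 <= k ^+ 2 * (k + 3).
  by apply: mulr_ge0; rewrite ?sqr_ge0 //; lra.
have linear_le : (a ^+ 2 + 3 * a + 6) * k <= (a ^+ 2 + 3 * a + 6) * (a - 1).
  by rewrite ler_pM2l //; nra.
have a3_ge0 : 0 <= a ^+ 3 by rewrite exprn_ge0 //; lra.
nra.
Qed.

Theorem lemma7p2 (a : nat) :
  (a %% 27 = 3 \/ a %% 27 = 21)%N ->
  (12 < a)%N ->
  squarefree (Delta a %/ 27) ->
  (* part 1: alpha = -r rho + rho^2, 1 <= r <= a/3 *)
  (forall r : nat, (1 <= r)%N -> (3 * r <= a)%N ->
     normK a%:R ('X^2 - r%:R *: 'X)
       <= (2 * a%:R + 3) * (Delta a)%:R / 27) /\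
  (* part 2: alpha = -(r+1) g2 + g3, g2 = rho, g3 = (1+rho+rho^2)/3,
     0 <= r <= a/3 - 1 *)
  (forall r : nat, (3 * (r + 1) <= a)%N ->
     normK a%:R (3^-1 *: (1 + 'X + 'X^2) - (r%:R + 1) *: 'X)
       < (2 * a%:R + 3) * (Delta a)%:R / 27).
Proof.
move=> _ _ _; rewrite natr_Delta; split => [r _ | r].
- rewrite -(ler_nat rat) natrM => le_3r_a.
  exact: normK_rho2_sub_rho_le.
- rewrite -(ler_nat rat) natrM natrD => le_3c_a.
  by apply: normK_g3_sub_rho_lt; rewrite ?addr_ge0.
Qed.
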